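(* Let $\Lambda\ge1$ and $\kappa_1=258/\pi$. Then for all $0\le r\le2\Lambda$, $$|U_\Lambda(r)-U(r)|\le\kappa_1\frac{r}{2E(\Lambda)}.$$
   Context: $E(r)=(1+r^2)^{1/2}$. $B_\Lambda=\frac1\pi\int_0^{\Lambda/E(\Lambda)}\frac{z^2-z^4/3}{1-z^2}dz$. For $0\le r\le2\Lambda$, with $Z_\Lambda(r)=(E(\Lambda)-E(\Lambda-r))/r$ (and $Z_\Lambda(0)=\Lambda/E(\Lambda)$), $B_\Lambda(r)=\frac1\pi\int_0^{Z_\Lambda(r)}\frac{z^2-z^4/3}{(1-z^2)(1+r^2(1-z^2)/4)}dz+\frac{r}{2\pi}\int_0^{Z_\Lambda(r)}\frac{z-z^3/3}{E(\Lambda)-rz/2}dz$, and $U_\Lambda(r)=B_\Lambda-B_\Lambda(r)$. $U(r)=\frac{r^2}{4\pi}\int_0^1\frac{z^2-z^4/3}{1+r^2(1-z^2)/4}dz$. *)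

From Stdlib Require Import Reals Lra ClassicalEpsilon.
Open Scope R_scope.

(* Total Riemann integral: equals RiemannInt pr whenever f is Riemann
   integrable on [a,b] (the value does not depend on pr, RiemannInt_P5);
   an arbitrary value otherwise (never used: all integrands below are
   continuous on their intervals). *)
Definition RInt (f : R -> R) (a b : R) : R :=
  epsilon (inhabits 0)
    (fun I => exists pr : Riemann_integrable f a b, RiemannInt pr = I).

Definition E (r : R) : R := sqrt (1 + r ^ 2).

Definition kappa1 : R := 258 / PI.

Definition B0 (L : R) : R :=
  / PI * RInt (fun z => (z ^ 2 - z ^ 4 / 3) / (1 - z ^ 2)) 0 (L / E L).

Definition Z (L r : R) : R :=
  if Req_EM_T r 0 then L / E L else (E L - E (L - r)) / r.

Definition Br (L r : R) : R :=
  / PI * RInt (fun z => (z ^ 2 - z ^ 4 / 3) /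
                        ((1 - z ^ 2) * (1 + r ^ 2 * (1 - z ^ 2) / 4))) 0 (Z L r)
  + r / (2 * PI) * RInt (fun z => (z - z ^ 3 / 3) / (E L - r * z / 2)) 0 (Z L r).

Definition UL (L r : R) : R := B0 L - Br L r.

Definition U (r : R) : R :=
  r ^ 2 / (4 * PI) *
  RInt (fun z => (z ^ 2 - z ^ 4 / 3) / (1 + r ^ 2 * (1 - z ^ 2) / 4)) 0 1.

From Pilot Require Import Defs.
From Stdlib Require Import Reals Lra ClassicalEpsilon.
Open Scope R_scope.

(* On [[0, L / E L]] the integrand of [B_L] is that of the first part of
   [B_L(r)] plus [r^2/4] times that of [U].  After this cancellation,
   [pi * (U_L(r) - U(r))] is a difference of nonnegative integrals: the one of
   [B_L(r)]'s first integrand over [[Z, L / E L]], and two remainders that are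
   at most [r / E L] because [1 - L / E L = 1 / (E L (E L + L))] and
   [r Z <= E L].  The first integral is at most [129 r / E L]: for [3 r <= 2 L]
   the integrand is at most [E L ^ 2] and [Z] is within [3 r / E L ^ 3] of
   [L / E L]; for larger [r] it is dominated by [4 / (r^2 (1 - z)^2)], whose
   primitive is explicit. *)

Definition continuous_on (f : R -> R) (a b : R) : Prop :=
  forall x, a <= x <= b -> continuity_pt f x.

Lemma RInt_eq_RiemannInt f a b (pr : Riemann_integrable f a b) :
  RInt f a b = RiemannInt pr.
Proof.
  unfold RInt.
  destruct (epsilon_spec (inhabits 0)
    (fun I => exists pr : Riemann_integrable f a b, RiemannInt pr = I)
    (ex_intro _ (RiemannInt pr) (ex_intro _ pr eq_refl))) as [pr' <-].
  apply RiemannInt_P5.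
Qed.

Lemma RInt_Chasles f a b c : a <= b -> b <= c -> continuous_on f a c ->
  RInt f a b + RInt f b c = RInt f a c.
Proof.
  intros hab hbc hf.
  assert (p1 : Riemann_integrable f a b)
    by (apply continuity_implies_RiemannInt; auto; intros; apply hf; lra).
  assert (p2 : Riemann_integrable f b c)
    by (apply continuity_implies_RiemannInt; auto; intros; apply hf; lra).
  assert (p3 : Riemann_integrable f a c)
    by (apply continuity_implies_RiemannInt; auto; lra).
  rewrite (RInt_eq_RiemannInt _ _ _ p1), (RInt_eq_RiemannInt _ _ _ p2),
    (RInt_eq_RiemannInt _ _ _ p3).
  apply RiemannInt_P26.
Qed.

Lemma RInt_le_compat f g a b : a <= b -> continuous_on f a b -> continuous_on g a b ->
  (forall x, a <= x <= b -> f x <= g x) -> RInt f a b <= RInt g a b.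
Proof.
  intros hab hf hg hle.
  assert (pf : Riemann_integrable f a b) by (apply continuity_implies_RiemannInt; auto).
  assert (pg : Riemann_integrable g a b) by (apply continuity_implies_RiemannInt; auto).
  rewrite (RInt_eq_RiemannInt _ _ _ pf), (RInt_eq_RiemannInt _ _ _ pg).
  apply RiemannInt_P19; auto. intros; apply hle; lra.
Qed.

Lemma RInt_plus_scal h f g l a b : a <= b ->
  continuous_on h a b -> continuous_on f a b -> continuous_on g a b ->
  (forall x, a <= x <= b -> h x = f x + l * g x) ->
  RInt h a b = RInt f a b + l * RInt g a b.
Proof.
  intros hab hh hf hg he.
  assert (pf : Riemann_integrable f a b) by (apply continuity_implies_RiemannInt; auto).
  assert (pg : Riemann_integrable g a b) by (apply continuity_implies_RiemannInt; auto).
  assert (ph : Riemann_integrable h a b) by (apply continuity_implies_RiemannInt; auto).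
  rewrite (RInt_eq_RiemannInt _ _ _ pf), (RInt_eq_RiemannInt _ _ _ pg),
    (RInt_eq_RiemannInt _ _ _ ph), <- (RiemannInt_P13 pf pg (RiemannInt_P10 l pf pg)).
  apply RiemannInt_P18; auto. intros; apply he; lra.
Qed.

Lemma RInt_FTC f F a b : a <= b -> continuous_on f a b ->
  (forall x, a <= x <= b -> derivable_pt_lim F x (f x)) ->
  RInt f a b = F b - F a.
Proof.
  intros hab hf hF.
  assert (pr : Riemann_integrable f a b) by (apply continuity_implies_RiemannInt; auto).
  rewrite (RInt_eq_RiemannInt _ _ _ pr), (RiemannInt_P20 hab (FTC_P1 hab hf) pr).
  assert (hanti : antiderivative f F a b).
  { split; auto. intros x hx.
    exists (exist _ (f x) (hF x hx)). symmetry. apply derive_pt_eq_0; auto. }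
  destruct (antiderivative_Ucte f _ _ _ _ (RiemannInt_P29 hab hf) hanti) as [C HC].
  rewrite !HC; [ring | lra | lra].
Qed.

Lemma RInt_const c a b : a <= b -> RInt (fun _ => c) a b = c * (b - a).
Proof.
  intros hab. rewrite (RInt_FTC _ (fun x => c * x)); auto.
  - ring.
  - intros x _. reg.
  - intros x _. pose proof (derivable_pt_lim_scal id c x 1 (derivable_pt_lim_id x)) as H.
    rewrite Rmult_1_r in H. exact H.
Qed.

Lemma RInt_le_const f c a b : a <= b -> continuous_on f a b ->
  (forall x, a <= x <= b -> f x <= c) -> RInt f a b <= c * (b - a).
Proof.
  intros hab hf hle. rewrite <- RInt_const by auto.
  apply RInt_le_compat; auto. intros x _; reg.
Qed.

Lemma RInt_ge_0 f a b : a <= b -> continuous_on f a b ->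
  (forall x, a <= x <= b -> 0 <= f x) -> 0 <= RInt f a b.
Proof.
  intros hab hf hge. replace 0 with (RInt (fun _ => 0) a b)
    by (rewrite RInt_const; auto; ring).
  apply RInt_le_compat; auto. intros x _; reg.
Qed.

Lemma Rdiv_le_of_le_mul n d c : 0 < d -> n <= c * d -> n / d <= c.
Proof.
  intros hd h. apply Rmult_le_reg_r with d; auto.
  unfold Rdiv. rewrite Rmult_assoc, Rinv_l; lra.
Qed.

Lemma E_sq x : E x ^ 2 = 1 + x ^ 2.
Proof. unfold E. rewrite <- Rsqr_pow2. apply Rsqr_sqrt. nra. Qed.

Lemma E_pos x : 0 < E x.
Proof. unfold E. apply sqrt_lt_R0. nra. Qed.

Lemma Rabs_lt_E x : Rabs x < E x.
Proof.
  pose proof (E_sq x). pose proof (E_pos x).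
  apply Rabs_def1; nra.
Qed.

Lemma div_E_lt_1 L : L / E L < 1.
Proof.
  pose proof (E_pos L). pose proof (Rabs_lt_E L). pose proof (Rle_abs L).
  apply Rmult_lt_reg_r with (E L); [lra |].
  unfold Rdiv. rewrite Rmult_assoc, Rinv_l; lra.
Qed.

Lemma one_sub_div_E L : 1 - L / E L = / (E L * (E L + L)).
Proof.
  pose proof (E_sq L). pose proof (E_pos L).
  pose proof (Rabs_lt_E L). pose proof (Rle_abs (- L)). rewrite Rabs_Ropp in *.
  field_simplify_eq; [nra | lra].
Qed.

(* A difference quotient of the convex [E] is at most [E' L = L / E L];
   algebraically this is Cauchy-Schwarz for [(1, L)] and [(1, L - r)]. *)
Lemma Z_le_div_E L r : 0 <= r -> Defs.Z L r <= L / E L.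
Proof.
  intros hr. unfold Defs.Z. destruct (Req_EM_T r 0) as [_ | hr0]; [lra |].
  pose proof (E_sq L). pose proof (E_sq (L - r)). pose proof (E_pos L). pose proof (E_pos (L - r)).
  assert (hCS : 1 + L * (L - r) <= E L * E (L - r)).
  { destruct (Rle_dec (1 + L * (L - r)) 0); [nra |].
    apply Rsqr_incr_0_var; unfold Rsqr; nra. }
  apply Rmult_le_reg_r with (r * E L); [nra |].
  replace ((E L - E (L - r)) / r * (r * E L)) with (E L ^ 2 - E L * E (L - r)) by (field; lra).
  replace (L / E L * (r * E L)) with (L * r) by (field; lra).
  nra.
Qed.

Lemma Z_ge_0 L r : 0 <= r <= 2 * L -> 0 <= Defs.Z L r.
Proof.
  intros hr. pose proof (E_pos L). unfold Defs.Z. destruct (Req_EM_T r 0) as [_ | hr0].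
  - apply Rle_mult_inv_pos; lra.
  - pose proof (E_sq L). pose proof (E_sq (L - r)). pose proof (E_pos (L - r)).
    assert (E (L - r) <= E L) by (apply Rsqr_incr_0_var; unfold Rsqr; nra).
    apply Rle_mult_inv_pos; lra.
Qed.

Lemma Rmult_Z_le_E L r : r * Defs.Z L r <= E L.
Proof.
  pose proof (E_pos L). pose proof (E_pos (L - r)). unfold Defs.Z.
  destruct (Req_EM_T r 0) as [-> | hr0].
  - lra.
  - replace (r * ((E L - E (L - r)) / r)) with (E L - E (L - r)) by (field; lra). lra.
Qed.

Definition fB (z : R) : R := (z ^ 2 - z ^ 4 / 3) / (1 - z ^ 2).

Definition fBr (r z : R) : R :=
  (z ^ 2 - z ^ 4 / 3) / ((1 - z ^ 2) * (1 + r ^ 2 * (1 - z ^ 2) / 4)).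

Definition gBr (L r z : R) : R := (z - z ^ 3 / 3) / (E L - r * z / 2).

Definition fU (r z : R) : R := (z ^ 2 - z ^ 4 / 3) / (1 + r ^ 2 * (1 - z ^ 2) / 4).

Lemma fB_continuous_on a b : -1 < a -> b < 1 -> continuous_on fB a b.
Proof. intros ha hb x hx. assert (1 - x ^ 2 <> 0) by nra. unfold fB. reg. Qed.

Lemma fBr_continuous_on r a b : -1 < a -> b < 1 -> continuous_on (fBr r) a b.
Proof.
  intros ha hb x hx.
  assert ((1 - x ^ 2) * (1 + r ^ 2 * (1 - x ^ 2) / 4) <> 0).
  { assert (0 < 1 - x ^ 2) by nra. assert (0 <= r ^ 2 * (1 - x ^ 2)) by nra. nra. }
  unfold fBr. reg.
Qed.

Lemma fU_continuous_on r a b : -1 <= a -> b <= 1 -> continuous_on (fU r) a b.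
Proof.
  intros ha hb x hx.
  assert (1 + r ^ 2 * (1 - x ^ 2) / 4 <> 0).
  { assert (0 <= 1 - x ^ 2) by nra. assert (0 <= r ^ 2 * (1 - x ^ 2)) by nra. lra. }
  unfold fU. reg.
Qed.

Lemma gBr_continuous_on L r b : 0 <= r -> r * b < 2 * E L -> continuous_on (gBr L r) 0 b.
Proof.
  intros hr hb x hx. assert (E L - r * x / 2 <> 0) by nra. unfold gBr. reg.
Qed.

Lemma fB_eq r x : -1 < x < 1 -> fB x = fBr r x + r ^ 2 / 4 * fU r x.
Proof.
  intros hx. assert (0 < 1 - x ^ 2) by nra. assert (0 <= r ^ 2 * (1 - x ^ 2)) by nra.
  unfold fB, fBr, fU. field. lra.
Qed.

Lemma UL_sub_U L r : 0 <= Defs.Z L r <= L / E L ->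
  UL L r - U r =
  / PI * (RInt (fBr r) (Defs.Z L r) (L / E L)
          - r ^ 2 / 4 * RInt (fU r) (L / E L) 1
          - r / 2 * RInt (gBr L r) 0 (Defs.Z L r)).
Proof.
  intros hZ. pose proof (div_E_lt_1 L) as ha1. pose proof PI_RGT_0.
  set (a := L / E L) in *. set (c := Defs.Z L r) in *.
  assert (hfB : RInt fB 0 a = RInt (fBr r) 0 a + r ^ 2 / 4 * RInt (fU r) 0 a).
  { apply RInt_plus_scal; try lra.
    - apply fB_continuous_on; lra.
    - apply fBr_continuous_on; lra.
    - apply fU_continuous_on; lra.
    - intros x hx. apply fB_eq; lra. }
  assert (hfBr : RInt (fBr r) 0 c + RInt (fBr r) c a = RInt (fBr r) 0 a).
  { apply RInt_Chasles; try lra. apply fBr_continuous_on; lra. }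
  assert (hfU : RInt (fU r) 0 a + RInt (fU r) a 1 = RInt (fU r) 0 1).
  { apply RInt_Chasles; try lra. apply fU_continuous_on; lra. }
  unfold UL, B0, Br, U. fold fB (fBr r) (gBr L r) (fU r) a c.
  rewrite hfB, <- hfBr, <- hfU. field. lra.
Qed.

Lemma numerators_bounds x : 0 <= x <= 1 ->
  0 <= x ^ 2 - x ^ 4 / 3 <= 1 /\ 0 <= x - x ^ 3 / 3 <= 1.
Proof. intros hx. assert (0 <= x ^ 2 <= 1) by nra. split; split; nra. Qed.

Lemma fBr_nonneg r x : 0 <= x < 1 -> 0 <= fBr r x.
Proof.
  intros hx. destruct (numerators_bounds x) as [[hn _] _]; [lra |].
  assert (0 < 1 - x ^ 2) by nra. assert (0 <= r ^ 2 * (1 - x ^ 2)) by nra.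
  apply Rle_mult_inv_pos; nra.
Qed.

Lemma fBr_le_E_sq L r x : 0 <= x <= L / E L -> fBr r x <= E L ^ 2.
Proof.
  intros hx. pose proof (div_E_lt_1 L). pose proof (E_pos L). pose proof (E_sq L).
  destruct (numerators_bounds x) as [[_ hn] _]; [lra |].
  assert (hxE : x * E L <= L / E L * E L) by (apply Rmult_le_compat_r; lra).
  replace (L / E L * E L) with L in hxE by (field; lra).
  assert ((x * E L) ^ 2 <= L ^ 2) by (apply pow_incr; nra).
  assert (1 <= E L ^ 2 * (1 - x ^ 2)) by nra.
  assert (0 < 1 - x ^ 2) by nra. assert (0 <= r ^ 2 * (1 - x ^ 2)) by nra.
  unfold fBr. apply Rdiv_le_of_le_mul; nra.
Qed.

Lemma fBr_le_pole r x : r <> 0 -> 0 <= x < 1 -> fBr r x <= 4 / r ^ 2 / (1 - x) ^ 2.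
Proof.
  intros hr hx. destruct (numerators_bounds x) as [[_ hn] _]; [lra |].
  assert (hr2 : 0 < r ^ 2) by (pose proof (pow2_ge_0 r); pose proof (pow_nonzero r 2 hr); lra).
  assert (hd : 0 < r ^ 2 * (1 - x) ^ 2) by (apply Rmult_lt_0_compat; [| apply pow_lt]; lra).
  assert (hq : 4 / (r ^ 2 * (1 - x) ^ 2) * (r ^ 2 * (1 - x) ^ 2 / 4) = 1) by (field; lra).
  assert (r ^ 2 * (1 - x) ^ 2 / 4 <= (1 - x ^ 2) * (1 + r ^ 2 * (1 - x ^ 2) / 4)).
  { assert ((1 - x) ^ 2 <= (1 - x ^ 2) ^ 2) by (apply pow_incr; nra). nra. }
  assert (0 < 4 / (r ^ 2 * (1 - x) ^ 2)) by (apply Rdiv_lt_0_compat; lra).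
  replace (4 / r ^ 2 / (1 - x) ^ 2) with (4 / (r ^ 2 * (1 - x) ^ 2)) by (field; lra).
  unfold fBr. apply Rdiv_le_of_le_mul; nra.
Qed.

Lemma fU_bounds r x : 0 <= x <= 1 -> 0 <= fU r x <= 1.
Proof.
  intros hx. destruct (numerators_bounds x) as [hn _]; [lra |].
  assert (0 <= r ^ 2 * (1 - x ^ 2)) by (apply Rmult_le_pos; [apply pow2_ge_0 | nra]).
  unfold fU. split.
  - apply Rle_mult_inv_pos; lra.
  - apply Rdiv_le_of_le_mul; lra.
Qed.

Lemma gBr_bounds L r x : 0 <= r -> 0 <= x <= 1 -> r * x <= E L ->
  0 <= gBr L r x <= 2 / E L.
Proof.
  intros hr hx hrx. pose proof (E_pos L). destruct (numerators_bounds x) as [_ hn]; [lra |].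
  unfold gBr. split.
  - apply Rle_mult_inv_pos; lra.
  - apply Rdiv_le_of_le_mul; [lra |].
    replace (2 / E L * (E L - r * x / 2)) with (2 - r * x / E L) by (field; lra).
    assert (r * x / E L <= 1) by (apply Rdiv_le_of_le_mul; lra). lra.
Qed.

Lemma derivable_pt_lim_div_one_sub c x : x <> 1 ->
  derivable_pt_lim (fun z => c / (1 - z)) x (c / (1 - x) ^ 2).
Proof.
  intros hx.
  assert (hd : derivable_pt_lim (fun z => 1 - z) x (0 - 1))
    by (apply (derivable_pt_lim_minus (fun _ => 1) id);
        [apply derivable_pt_lim_const | apply derivable_pt_lim_id]).
  pose proof (derivable_pt_lim_div (fun _ => c) (fun z => 1 - z) x 0 (0 - 1)
    (derivable_pt_lim_const c x) hd) as H.
  replace (c / (1 - x) ^ 2) with ((0 * (1 - x) - (0 - 1) * c) / (1 - x)²)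
    by (unfold Rsqr; field; lra).
  apply H. lra.
Qed.

Lemma RInt_fBr_le_E_sq L r c : 0 <= c <= L / E L ->
  RInt (fBr r) c (L / E L) <= E L ^ 2 * (L / E L - c).
Proof.
  intros hc. pose proof (div_E_lt_1 L).
  apply RInt_le_const; try lra.
  - apply fBr_continuous_on; lra.
  - intros x hx. apply fBr_le_E_sq; lra.
Qed.

Lemma RInt_fBr_le_pole r c a : r <> 0 -> 0 <= c <= a -> a < 1 ->
  RInt (fBr r) c a <= 4 / r ^ 2 / (1 - a).
Proof.
  intros hr hc ha.
  assert (hr2 : 0 < r ^ 2) by (pose proof (pow2_ge_0 r); pose proof (pow_nonzero r 2 hr); lra).
  set (pole := fun z => 4 / r ^ 2 / (1 - z) ^ 2).
  assert (hpole : continuous_on pole c a).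
  { intros x hx. assert ((1 - x) ^ 2 <> 0) by (apply pow_nonzero; lra). unfold pole. reg. }
  apply Rle_trans with (RInt pole c a).
  - apply RInt_le_compat; try lra.
    + apply fBr_continuous_on; lra.
    + exact hpole.
    + intros x hx. apply fBr_le_pole; lra.
  - rewrite (RInt_FTC pole (fun z => 4 / r ^ 2 / (1 - z))); try lra; auto.
    + assert (0 <= 4 / r ^ 2 / (1 - c)) by (apply Rle_mult_inv_pos; [apply Rle_mult_inv_pos |]; lra).
      lra.
    + intros x hx. apply derivable_pt_lim_div_one_sub. lra.
Qed.

(* With [E1 = E (L - r)], [E L ^ 2 * (L / E L - Z L r) = E L * D / r] where
   [D * (E L * E1 + 1 + L * (L - r)) = r ^ 2], and [E L <= 3 * E1] when [3 r <= 2 L]. *)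
Lemma small_r_bound L r : 0 <= r -> 3 * r <= 2 * L ->
  E L ^ 2 * (L / E L - Defs.Z L r) <= 3 * (r / E L).
Proof.
  intros hr hr3. pose proof (E_pos L) as h0. unfold Defs.Z.
  destruct (Req_EM_T r 0) as [-> | hr0].
  { replace (L / E L - L / E L) with 0 by ring. lra. }
  pose proof (E_pos (L - r)) as h1. pose proof (E_sq L) as hE0. pose proof (E_sq (L - r)) as hE1.
  set (E0 := E L) in *. set (E1 := E (L - r)) in *.
  set (D := E0 * E1 - 1 - L * (L - r)). set (P := E0 * E1 + 1 + L * (L - r)).
  assert (hDP : D * P = r ^ 2).
  { unfold D, P. replace ((E0 * E1 - 1 - L * (L - r)) * (E0 * E1 + 1 + L * (L - r)))
      with (E0 ^ 2 * E1 ^ 2 - (1 + L * (L - r)) ^ 2) by ring.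
    rewrite hE0, hE1. ring. }
  assert (hE01 : E0 <= 3 * E1) by (apply Rsqr_incr_0_var; unfold Rsqr; nra).
  assert (hP : E0 ^ 2 <= 3 * P) by (unfold P; nra).
  replace (E0 ^ 2 * (L / E0 - (E0 - E1) / r)) with (E0 * D / r).
  2:{ unfold D. field_simplify_eq; [| lra].
      replace (E0 ^ 3) with (E0 * E0 ^ 2) by ring. rewrite hE0. ring. }
  apply Rdiv_le_of_le_mul; [lra |].
  replace (3 * (r / E0) * r) with (3 * r ^ 2 / E0) by (field; lra).
  apply Rmult_le_reg_r with E0; [lra |].
  replace (3 * r ^ 2 / E0 * E0) with (3 * r ^ 2) by (field; lra).
  nra.
Qed.

Lemma large_r_bound L r : 1 <= L -> 2 * L < 3 * r -> r <= 2 * L ->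
  4 / r ^ 2 / (1 - L / E L) <= 129 * (r / E L).
Proof.
  intros hL hr3 hr. pose proof (E_pos L). pose proof (E_sq L).
  assert (hE : E L <= 3 / 2 * L) by (apply Rsqr_incr_0_var; unfold Rsqr; nra).
  assert (hr3' : (2 * L) ^ 3 <= (3 * r) ^ 3) by (apply pow_incr; lra).
  rewrite one_sub_div_E.
  replace (4 / r ^ 2 / / (E L * (E L + L))) with (4 * E L ^ 2 * (E L + L) / E L / r ^ 2)
    by (field; lra).
  apply Rdiv_le_of_le_mul; [apply pow_lt; lra |].
  replace (129 * (r / E L) * r ^ 2) with (129 * r ^ 3 / E L) by (field; lra).
  apply Rmult_le_compat_r; [apply Rlt_le, Rinv_0_lt_compat; lra |].
  nra.
Qed.

Lemma RInt_fBr_bounds L r : 1 <= L -> 0 <= r <= 2 * L ->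
  0 <= RInt (fBr r) (Defs.Z L r) (L / E L) <= 129 * (r / E L).
Proof.
  intros hL hr. pose proof (div_E_lt_1 L). pose proof (E_pos L).
  pose proof (Z_ge_0 L r hr). pose proof (Z_le_div_E L r (proj1 hr)).
  assert (0 <= r / E L) by (apply Rle_mult_inv_pos; lra).
  split.
  - apply RInt_ge_0; try lra.
    + apply fBr_continuous_on; lra.
    + intros x hx. apply fBr_nonneg; lra.
  - destruct (Rle_dec (3 * r) (2 * L)).
    + eapply Rle_trans; [apply RInt_fBr_le_E_sq; lra |].
      eapply Rle_trans; [apply small_r_bound; lra | lra].
    + eapply Rle_trans; [apply RInt_fBr_le_pole; lra |].
      apply large_r_bound; lra.
Qed.

Lemma RInt_fU_bounds L r : 0 <= r <= 2 * L ->
  0 <= r ^ 2 / 4 * RInt (fU r) (L / E L) 1 <= r / E L.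
Proof.
  intros hr. pose proof (div_E_lt_1 L). pose proof (E_pos L).
  assert (0 <= L / E L) by (apply Rle_mult_inv_pos; lra).
  assert (hcont : continuous_on (fU r) (L / E L) 1) by (apply fU_continuous_on; lra).
  assert (hJ0 : 0 <= RInt (fU r) (L / E L) 1).
  { apply RInt_ge_0; auto; try lra. intros x hx. apply fU_bounds; lra. }
  assert (hJ1 : RInt (fU r) (L / E L) 1 <= 1 * (1 - L / E L)).
  { apply RInt_le_const; auto; try lra. intros x hx. apply fU_bounds; lra. }
  rewrite one_sub_div_E in hJ1.
  assert (r / 4 <= E L + L) by lra.
  assert (hEL : 0 < E L * (E L + L)) by nra.
  assert (r ^ 2 / 4 * / (E L * (E L + L)) <= r / E L).
  { apply Rdiv_le_of_le_mul; [exact hEL |].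
    replace (r / E L * (E L * (E L + L))) with (r * (E L + L)) by (field; lra). nra. }
  split; [apply Rmult_le_pos; nra | nra].
Qed.

Lemma RInt_gBr_bounds L r : 0 <= r <= 2 * L ->
  0 <= r / 2 * RInt (gBr L r) 0 (Defs.Z L r) <= r / E L.
Proof.
  intros hr. pose proof (div_E_lt_1 L). pose proof (E_pos L).
  pose proof (Z_ge_0 L r hr). pose proof (Z_le_div_E L r (proj1 hr)).
  pose proof (Rmult_Z_le_E L r).
  assert (hcont : continuous_on (gBr L r) 0 (Defs.Z L r)) by (apply gBr_continuous_on; lra).
  assert (hrx : forall x, 0 <= x <= Defs.Z L r -> r * x <= E L) by (intros; nra).
  assert (0 <= RInt (gBr L r) 0 (Defs.Z L r)).
  { apply RInt_ge_0; auto. intros x hx. apply gBr_bounds; auto; lra. }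
  assert (RInt (gBr L r) 0 (Defs.Z L r) <= 2 / E L * (Defs.Z L r - 0)).
  { apply RInt_le_const; auto. intros x hx. apply gBr_bounds; auto; lra. }
  assert (r / 2 * (2 / E L * Defs.Z L r) <= r / E L).
  { replace (r / 2 * (2 / E L * Defs.Z L r)) with (r / E L * Defs.Z L r) by (field; lra).
    assert (0 <= r / E L) by (apply Rle_mult_inv_pos; lra). nra. }
  split; nra.
Qed.

Theorem lemma11 (L r : R) (hL : 1 <= L) (hr0 : 0 <= r) (hr : r <= 2 * L) :
  Rabs (UL L r - U r) <= kappa1 * (r / (2 * E L)).
Proof.
  assert (hr' : 0 <= r <= 2 * L) by lra.
  pose proof PI_RGT_0. pose proof (E_pos L).
  rewrite UL_sub_U by (split; [apply Z_ge_0 | apply Z_le_div_E]; lra).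
  pose proof (RInt_fBr_bounds L r hL hr').
  pose proof (RInt_fU_bounds L r hr'). pose proof (RInt_gBr_bounds L r hr').
  replace (kappa1 * (r / (2 * E L))) with (/ PI * (129 * (r / E L)))
    by (unfold kappa1; field; lra).
  rewrite Rabs_mult, Rabs_right by (apply Rle_ge, Rlt_le, Rinv_0_lt_compat; lra).
  apply Rmult_le_compat_l; [apply Rlt_le, Rinv_0_lt_compat; lra |].
  apply Rabs_le. lra.
Qed.
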